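(* Let $q$ be an odd prime power with characteristic $p$, let $1\le n\le q^2-1$, and write $n=u+vq$ with $0\le u,v\le q-1$. Define \[ \mathrm{II}=\sum_{\substack{\alpha,\beta\ge 0,\ \beta\le q-2\\ 0<\alpha+\beta\le q-1}}\ \sum_{\substack{k\ge 1,\ j\ge 0\\ k+j\le q-1\\ 2k-j\equiv\alpha+\beta\pmod{q-1}\\ q(q-1)+k-j-(\alpha+\beta q)=n}}2^{\alpha+\beta}\binom{2(q-1)-\alpha-\beta}{q-1}\binom{q-1-k}{j}(-1)^j . \] Then in $\mathbb F_p$, \[ \mathrm{II}=\sum_{\substack{0\le s\le 2\\ \max\{0,\,v-s+\frac{u+v}{q-1}\}<\alpha\le\min\{q-1,\,v-s+\frac{u+v}{q-1}+1\}}}\binom{u+v-(s+\alpha-v-1)(q-1)}{(s+2\alpha-2v)(q-1)-2(u+v)}, \] the sum being over integers $s,\alpha$ in the indicated ranges.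
   Context: For integers $m\ge 0$ and $k$, $\binom mk$ is the usual binomial coefficient, equal to $0$ unless $0\le k\le m$; integers are interpreted in $\mathbb F_p$. *)

From mathcomp Require Import all_boot all_order all_algebra.
Set Implicit Arguments. Unset Strict Implicit. Unset Printing Implicit Defensive.
Import Order.TTheory GRing.Theory Num.Theory.

Definition binz (m k : int) : nat :=
  if ((0 <= k) && (k <= m))%R then 'C(`|m|%N, `|k|%N) else 0%N.

Local Open Scope ring_scope.

Definition sumII (p q n : nat) : 'F_p :=
  \sum_(a < q) \sum_(b < q.-1)
    \sum_(k < q) \sum_(j < q |
        [&& (0 < a + b)%N, (a + b <= q - 1)%N,
            (1 <= k)%N, (k + j <= q - 1)%N,
            (((2 * k)%:Z - j%:Z == (a + b)%:Z %[mod (q - 1)%N%:Z])%Z) &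
            ((q * (q - 1) + k)%N%:Z - j%:Z - (a + b * q)%:Z == n%:Z)])
      ((2 : 'F_p) ^+ (a + b) * ('C((2 * (q - 1) - a - b)%N, (q - 1)%N))%:R
        * ('C((q - 1 - k)%N, j))%:R * (-1 : 'F_p) ^+ j).

Definition sumRHS (p q u v : nat) : 'F_p :=
  \sum_(s < 3) \sum_(a < q |
      let c : rat := v%:Q - s%:Q + (u + v)%:Q / (q - 1)%N%:Q in
      [&& (0 < a%:Q), (c < a%:Q), (a%:Q <= (q - 1)%N%:Q) & (a%:Q <= c + 1)])
    (binz ((u + v)%:Z - (s%:Z + a%:Z - v%:Z - 1%:Z) * (q - 1)%N%:Z)
          ((s%:Z + 2%:Z * a%:Z - 2%:Z * v%:Z) * (q - 1)%N%:Z - 2%:Z * (u + v)%:Z))%:R.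

From mathcomp Require Import all_boot all_order all_algebra finfield zify ring.
Set Implicit Arguments. Unset Strict Implicit. Unset Printing Implicit Defensive.
Import GRing.Theory Num.Theory.
Local Open Scope ring_scope.

(* Modulo p, the coefficient C(2(q-1) - α - β, q-1) vanishes unless α + β = q - 1
   (Vandermonde against C(q, .), whose inner coefficients are all divisible by p),
   and on that diagonal 2^(α+β) = 2^(q-1) = 1.  There the congruence reads
   2k - j = s(q - 1) for a unique s in {0, 1, 2}, and the equation for n determines
   k = (α + s - v)(q - 1) - (u + v) and j = 2k - s(q - 1), which is even as q is odd.
   Hence every surviving summand C(q-1-k, j) is the (s, α) summand of the right-hand
   side, whose range conditions on α say exactly 1 <= k <= q - 1. *)

Lemma prime_dvd_bin_pexp p e j : prime p -> (0 < j < p ^ e)%N -> (p %| 'C(p ^ e, j))%N.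
Proof.
move=> p_pr /andP[j_gt0 j_lt]; apply/negPn/negP => p_ndvd.
have cop : coprime (p ^ e) 'C(p ^ e, j) by apply: coprimeXl; rewrite prime_coprime.
have : (p ^ e %| j * 'C(p ^ e, j))%N.
  by rewrite -(prednK j_gt0) -mul_bin_diag dvdn_mulr.
by rewrite Gauss_dvdl // => /(dvdn_leq j_gt0); rewrite leqNgt j_lt.
Qed.

(* Vandermonde against [C(p^e, .)]: only the [j = 0] term survives mod p, and it vanishes. *)
Lemma prime_dvd_bin_pexpD p e m r : prime p -> (m < r < p ^ e)%N ->
  (p %| 'C(p ^ e + m, r))%N.
Proof.
move=> p_pr /andP[m_lt_r r_lt]; rewrite -binomial.Vandermonde.
apply: dvdn_sum => -[[|j] j_le] _ /=.
  by rewrite subn0 [in X in (_ * X)%N]bin_small ?muln0.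
by apply/dvdn_mulr/prime_dvd_bin_pexp => //; lia.
Qed.

Lemma Fp_expr_pexp p e (x : 'F_p) : prime p -> x ^+ (p ^ e) = x.
Proof.
move=> p_pr; elim: e => [|e IHe]; first by rewrite expn0 expr1.
by rewrite expnSr exprM IHe; have := expf_card x; rewrite card_Fp.
Qed.

Lemma Fp_expr_pexp_pred p e (x : 'F_p) : prime p -> x != 0 -> x ^+ (p ^ e).-1 = 1.
Proof.
move=> p_pr x_neq0; apply: (mulIf x_neq0).
by rewrite mul1r -exprSr prednK ?expn_gt0 ?prime_gt0 ?Fp_expr_pexp.
Qed.

Lemma sumr_if_const (V : nmodType) N (c : bool) (F : 'I_N -> V) :
  \sum_(i < N) (if c then F i else 0) = if c then \sum_(i < N) F i else 0.
Proof. by case: c => //; rewrite big1. Qed.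

Lemma sumr_ord_dirac (V : nmodType) N (X : int) (Y : V) :
  \sum_(i < N) (if i%:Z == X then Y else 0) = if (0 <= X) && (X < N%:Z) then Y else 0.
Proof.
case: ifP => X_range; last first.
  by rewrite big1 // => i _; case: eqP => // X_i; move: X_range (ltn_ord i); lia.
have X_lt : (`|X| < N)%N by lia.
rewrite (bigD1 (Ordinal X_lt)) /= ?ifT; [|lia|lia].
rewrite big1 ?addr0 // => i /eqP i_neq; case: eqP => // X_i.
by case: i_neq; apply: val_inj => /=; lia.
Qed.

Section Reduction.

Variables (p q u v : nat).
Hypotheses (q_gt2 : (2 < q)%N) (q_odd : odd q).
Hypothesis bin_vanish :
  forall i, (0 < i <= q - 2)%N -> ('C(2 * (q - 1) - i, q - 1)%:R : 'F_p) = 0.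
Hypothesis two_expr : (2 : 'F_p) ^+ (q - 1) = 1.

Definition lhs_index (a b k j : nat) : bool :=
  [&& (0 < a + b)%N, (a + b <= q - 1)%N, (1 <= k)%N, (k + j <= q - 1)%N,
      (((2 * k)%:Z - j%:Z == (a + b)%:Z %[mod (q - 1)%N%:Z])%Z) &
      ((q * (q - 1) + k)%N%:Z - j%:Z - (a + b * q)%:Z == (u + v * q)%N%:Z)].

Definition lhs_term (a b k j : nat) : 'F_p :=
  (2 : 'F_p) ^+ (a + b) * ('C((2 * (q - 1) - a - b)%N, (q - 1)%N))%:R
    * ('C((q - 1 - k)%N, j))%:R * (-1 : 'F_p) ^+ j.

Definition lhs_match (s a b k j : nat) : bool :=
  [&& (0 < k)%N, (k + j <= q - 1)%N, (2 * k)%:Z - j%:Z == s%:Z * (q - 1)%N%:Z &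
      (q * (q - 1) + k)%N%:Z - j%:Z - (a + b * q)%:Z == (u + v * q)%N%:Z].

Definition k_of (s a : nat) : int := (a%:Z + s%:Z - v%:Z) * (q - 1)%N%:Z - (u + v)%:Z.
Definition j_of (s a : nat) : int := 2 * k_of s a - s%:Z * (q - 1)%N%:Z.

Definition rhs_index (s a : nat) : bool :=
  [&& (0 < a)%N, (a <= q - 1)%N, 0 < k_of s a & k_of s a <= (q - 1)%N%:Z].

Definition rhs_term (s a : nat) : 'F_p := (binz ((q - 1)%N%:Z - k_of s a) (j_of s a))%:R.

Definition rhs_term_at (s a b k j : nat) : 'F_p :=
  if rhs_index s a then
    if b%:Z == q%:Z - 1 - a%:Z then
      if k%:Z == k_of s a then if j%:Z == j_of s a then rhs_term s a else 0 else 0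
    else 0
  else 0.

Lemma lhs_index_split a b k j (x : 'F_p) : (a + b = q - 1)%N ->
  (if lhs_index a b k j then x else 0) = \sum_(s < 3) (if lhs_match s a b k j then x else 0).
Proof.
move=> ab; rewrite !big_ord_recr big_ord0 /= add0r.
(* [2k - j] lies in [(1 - q, 2(q - 1)]], so it is [s(q - 1)] for a unique [s < 3] *)
have -> : lhs_index a b k j =
    [|| lhs_match 0 a b k j, lhs_match 1 a b k j | lhs_match 2 a b k j].
  rewrite /lhs_index /lhs_match ab eqz_mod_dvd.
  apply/idP/idP => [/and5P[_ _ k_gt0 kj /andP[/dvdzP[m Em] En]]|].
    have : m = -1 \/ m = 0 \/ m = 1 by nia.
    rewrite k_gt0 kj En !andbT /=.
    case=> [|[|]] Em'; rewrite Em' in Em; lia.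
  case/or3P => /and4P[k_gt0 kj Esk En]; rewrite k_gt0 kj En !andbT;
    apply/and3P; split; try lia; apply/dvdzP; [exists (-1) | exists 0 | exists 1]; lia.
rewrite /lhs_match.
by do 4 case: ifP => ?; rewrite ?addr0 ?add0r //; lia.
Qed.

Lemma lhs_matchE s a b k j : (a + b = q - 1)%N ->
  lhs_match s a b k j = [&& (0 < k)%N, (k + j <= q - 1)%N, k%:Z == k_of s a & j%:Z == j_of s a].
Proof.
move=> ab; rewrite /lhs_match /j_of /k_of.
apply/idP/idP => /and4P[k_gt0 kj E1 E2]; rewrite k_gt0 kj /=; lia.
Qed.

Lemma lhs_match_term s a b k j : (a + b = q - 1)%N -> (b < q.-1)%N -> (k < q)%N ->
  (if lhs_match s a b k j then ('C(q - 1 - k, j)%:R : 'F_p) * (-1) ^+ j else 0)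
  = rhs_term_at s a b k j.
Proof.
move=> ab b_lt k_lt; rewrite lhs_matchE // /rhs_term_at /rhs_index.
have b_eq : (b%:Z == q%:Z - 1 - a%:Z) = true by apply/eqP; lia.
rewrite b_eq; case: eqP => [k_eq|_]; last by rewrite /= !andbF !if_same.
case: eqP => [j_eq|_]; last by rewrite /= !andbF !if_same.
rewrite !andbT /rhs_term -k_eq -j_eq.
(* [j = 2k - s(q - 1)] is even because [q] is odd *)
have j_even : odd j = false by move: j_eq; rewrite /j_of; lia.
rewrite -signr_odd j_even mulr1 /binz.
case: ifP => kj; case: ifP => range //; try (exfalso; lia).
  by rewrite ifT; [congr (_%:R); congr 'C(_, _) | ]; lia.
by rewrite ifF //; lia.
Qed.

Lemma lhs_term_spread a b k j : (b < q.-1)%N -> (k < q)%N ->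
  (if lhs_index a b k j then lhs_term a b k j else 0) = \sum_(s < 3) rhs_term_at s a b k j.
Proof.
move=> b_lt k_lt; have [ab | ab_neq] := eqVneq (a + b)%N (q - 1)%N.
  rewrite /lhs_term -subnDA ab (_ : (2 * (q - 1) - (q - 1) = q - 1)%N); last by lia.
  rewrite binn two_expr !mul1r lhs_index_split //.
  by apply: eq_bigr => s _; apply: lhs_match_term.
rewrite big1 => [|s _]; last first.
  by rewrite /rhs_term_at; case: ifP => // _; rewrite ifF //; lia.
case: ifP => // idx.
by rewrite /lhs_term -subnDA bin_vanish ?mulr0 ?mul0r //; move: idx; rewrite /lhs_index; lia.
Qed.

Lemma sum_rhs_term_at s a :
  \sum_(b < q.-1) \sum_(k < q) \sum_(j < q) rhs_term_at s a b k j
  = if rhs_index s a then rhs_term s a else 0.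
Proof.
rewrite /rhs_term_at; under eq_bigr => b _.
  under eq_bigr => k _ do rewrite !sumr_if_const sumr_ord_dirac.
  rewrite !sumr_if_const sumr_ord_dirac.
  over.
rewrite !sumr_if_const sumr_ord_dirac; case: ifP => // /and4P[a_gt0 a_le k_gt0 k_le].
rewrite ifT; last by lia.
rewrite ifT; last by lia.
(* when [j] falls outside [0, q), the binomial in [rhs_term] is out of range too *)
by case: ifP => // j_out; rewrite /rhs_term /binz ifF //; lia.
Qed.

Lemma rhs_index_ratE (s a : nat) :
  (let c : rat := v%:Q - s%:Q + (u + v)%:Q / (q - 1)%N%:Q in
   [&& 0 < a%:Q, c < a%:Q, a%:Q <= (q - 1)%N%:Q & a%:Q <= c + 1]) = rhs_index s a.
Proof.
rewrite /= /rhs_index.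
set w : rat := (q - 1)%N%:Q; set c : rat := _ + _ / w.
have w_gt0 : 0 < w by rewrite ltr0n; lia.
have cw : c * w = ((v%:Z - s%:Z) * (q - 1)%N%:Z + (u + v)%:Z)%:~R.
  by rewrite /c mulrDl mulfVK ?lt0r_neq0 // intrD intrM intrB.
rewrite -[c < _](ltr_pM2r w_gt0) -[_ <= c + 1](ler_pM2r w_gt0) [(c + 1) * w]mulrDl mul1r cw.
rewrite /w -!intrM -intrD ltr0z !ltr_int !ler_int /k_of.
by apply/idP/idP => /and4P[? ? ? ?]; apply/and4P; split; lia.
Qed.

Lemma sumII_eq_sumRHS : sumII p q (u + v * q) = sumRHS p q u v.
Proof.
transitivity (\sum_(a < q) \sum_(b < q.-1) \sum_(k < q) \sum_(j < q) \sum_(s < 3)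
                rhs_term_at s a b k j).
  rewrite /sumII; apply: eq_bigr => a _; apply: eq_bigr => b _; apply: eq_bigr => k _.
  rewrite big_mkcond; apply: eq_bigr => j _.
  exact: lhs_term_spread (ltn_ord b) (ltn_ord k).
transitivity (\sum_(s < 3) \sum_(a < q) (if rhs_index s a then rhs_term s a else 0)).
  rewrite [RHS]exchange_big; apply: eq_bigr => a _.
  under [RHS]eq_bigr => s _ do rewrite -sum_rhs_term_at.
  rewrite [RHS]exchange_big; apply: eq_bigr => b _.
  by rewrite [RHS]exchange_big; apply: eq_bigr => k _; rewrite [RHS]exchange_big.
apply: eq_bigr => s _; rewrite [RHS]big_mkcond; apply: eq_bigr => a _.
rewrite rhs_index_ratE; case: ifP => // _.
by rewrite /rhs_term /j_of /k_of; congr (binz _ _)%:R; ring.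
Qed.

End Reduction.

Theorem lemma4p2 (p e n u v : nat) :
  prime p -> odd p -> (0 < e)%N ->
  let q := (p ^ e)%N in
  (1 <= n <= q ^ 2 - 1)%N ->
  (u <= q - 1)%N -> (v <= q - 1)%N -> n = (u + v * q)%N ->
  sumII p q n = sumRHS p q u v.
Proof.
move=> p_pr p_odd e_gt0 q _ _ _ ->.
have p_gt2 : (2 < p)%N by have := prime_gt1 p_pr; lia.
have q_gt2 : (2 < q)%N by apply: leq_trans p_gt2 _; rewrite -{1}(expn1 p) leq_pexp2l //; lia.
apply: (sumII_eq_sumRHS u v q_gt2) => [|i i_range|].
- by rewrite oddX p_odd orbT.
- apply/eqP; rewrite -(dvdn_pcharf (pchar_Fp p_pr)).
  rewrite (_ : 2 * (q - 1) - i = p ^ e + (q - 2 - i))%N; last by rewrite -/q; lia.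
  by apply: prime_dvd_bin_pexpD => //; rewrite -/q; lia.
- by rewrite subn1 Fp_expr_pexp_pred // -(dvdn_pcharf (pchar_Fp p_pr)) gtnNdvd.
Qed.
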